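(* Let $q$ be an odd prime power, let $s,t\ge0$ and $k\ge1$ be integers and $n=2k$. Let $\delta,\gamma\in\mathbb{F}_{q^k}$, let $\alpha\in\mathbb{F}_{q^n}$ satisfy $\alpha^{q^k}=-\alpha$ and $\beta\in\mathbb{F}_{q^n}$ satisfy $\beta^{q^k}=-\beta$. Then $$f(x)=\alpha(x^{q^k}+x+\delta)^t+\beta\,\mathrm{Tr}(x)+\gamma x^{q^s}$$ is a permutation polynomial of $\mathbb{F}_{q^n}$ if and only if $\gamma\neq0$.
   Context: $\mathrm{Tr}$ denotes the trace function from $\mathbb{F}_{q^n}$ to $\mathbb{F}_q$, $\mathrm{Tr}(x)=x+x^q+\cdots+x^{q^{n-1}}$. A permutation polynomial of $\mathbb{F}_{q^n}$ is one inducing a bijection of $\mathbb{F}_{q^n}$. *)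

From mathcomp Require Import all_boot all_order all_algebra all_field.
Set Implicit Arguments. Unset Strict Implicit. Unset Printing Implicit Defensive.
Import GRing.Theory.
Local Open Scope ring_scope.

Definition Tr (F : finFieldType) (q n : nat) (x : F) : F :=
  \sum_(i < n) x ^+ (q ^ i).

Definition prime_power (q : nat) : Prop :=
  exists p m : nat, prime p /\ (0 < m)%N /\ q = (p ^ m)%N.

Definition is_perm_poly (F : finFieldType) (f : F -> F) : Prop := bijective f.

From mathcomp Require Import all_boot all_order all_algebra all_field.
Set Implicit Arguments.
Unset Strict Implicit.
Unset Printing Implicit Defensive.
Import GRing.Theory.
Local Open Scope ring_scope.

(* Let [sigma x = x ^+ q^k], the involution of F_(q^2k) over F_(q^k), and
   [rtrace x = x + sigma x].  The map is [f x = A (rtrace x) + gamma x^(q^s)]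
   (Tr is a function of [rtrace x]), where [A] sends sigma-fixed elements to
   sigma-antifixed ones because alpha and beta are antifixed.  As [rtrace]
   kills antifixed elements, [rtrace (f x) = gamma (rtrace x)^(q^s)].  If
   gamma = 0, the image of f thus misses 1, as [rtrace 1 = 2 <> 0] in odd
   characteristic.  If gamma <> 0, [f x = f y] forces [rtrace x = rtrace y]
   by injectivity of Frobenius, hence [x^(q^s) = y^(q^s)] and [x = y]. *)

Lemma pchar_expr_inj (F : fieldType) (n : nat) :
  [pchar F].-nat n -> injective (fun x : F => x ^+ n).
Proof.
move=> pchar_n x y /= /eqP; rewrite -subr_eq0 -exprNn_pchar // -exprDn_pchar //.
by rewrite expf_eq0 subr_eq0 => /andP[_ /eqP].
Qed.

Lemma expr_sum_pchar (F : fieldType) (n : nat) (I : Type) (r : seq I)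
    (P : pred I) (G : I -> F) :
  [pchar F].-nat n ->
  (\sum_(i <- r | P i) G i) ^+ n = \sum_(i <- r | P i) G i ^+ n.
Proof.
move=> pchar_n; apply: (big_morph (fun x : F => x ^+ n)).
  by move=> x y; apply: exprDn_pchar.
by rewrite expr0n; case: n pchar_n.
Qed.

Definition rtrace (F : fieldType) (a : nat) (x : F) : F := x + x ^+ a.

Section PerturbedFrobenius.
Variables (F : fieldType) (a b : nat).
Hypotheses (pchar_a : [pchar F].-nat a) (pchar_b : [pchar F].-nat b).
Hypothesis exprK_a : forall x : F, x ^+ a ^+ a = x.

Lemma rtraceD (x y : F) : rtrace a (x + y) = rtrace a x + rtrace a y.
Proof. by rewrite /rtrace exprDn_pchar // addrACA. Qed.

Lemma rtrace_fixed (x : F) : rtrace a x ^+ a = rtrace a x.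
Proof. by rewrite /rtrace exprDn_pchar // exprK_a addrC. Qed.

Lemma rtrace_antifixed (y : F) : y ^+ a = - y -> rtrace a y = 0.
Proof. by rewrite /rtrace => ->; rewrite subrr. Qed.

Lemma rtraceMl (c x : F) : c ^+ a = c -> rtrace a (c * x) = c * rtrace a x.
Proof. by move=> c_fixed; rewrite /rtrace exprMn c_fixed mulrDr. Qed.

Lemma rtraceX (x : F) : rtrace a (x ^+ b) = rtrace a x ^+ b.
Proof. by rewrite /rtrace exprDn_pchar // exprAC. Qed.

Definition perturbed_frob (A : F -> F) (c x : F) : F := A (rtrace a x) + c * x ^+ b.

Variables (A : F -> F) (c : F).
Hypothesis c_fixed : c ^+ a = c.
Hypothesis A_antifixed : forall u, u ^+ a = u -> A u ^+ a = - A u.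

Lemma rtrace_perturbed_frob (x : F) :
  rtrace a (perturbed_frob A c x) = c * rtrace a x ^+ b.
Proof.
rewrite rtraceD rtraceMl // rtraceX rtrace_antifixed ?add0r //.
exact/A_antifixed/rtrace_fixed.
Qed.

Lemma perturbed_frob_inj : c != 0 -> injective (perturbed_frob A c).
Proof.
move=> c_neq0 x y fxy.
have rtrace_xy : rtrace a x = rtrace a y.
  by apply: (pchar_expr_inj pchar_b); apply: (mulfI c_neq0);
     rewrite -!rtrace_perturbed_frob fxy.
move: fxy; rewrite /perturbed_frob rtrace_xy => /addrI/(mulfI c_neq0).
exact: pchar_expr_inj.
Qed.

Lemma perturbed_frob_surj_neq0 (g : F -> F) :
  cancel g (perturbed_frob A c) -> 2%:R != 0 :> F -> c != 0.
Proof.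
move=> gK; apply: contra_neq => c0.
have := rtrace_perturbed_frob (g 1).
by rewrite gK c0 mul0r /rtrace expr1n -mulr2n.
Qed.

End PerturbedFrobenius.

Lemma pchar_nat_prime_power (F : finFieldType) (q n : nat) :
  prime_power q -> #|F| = (q ^ n)%N -> [pchar F].-nat q.
Proof.
move=> [p [m [p_pr [_ ->]]]] cardF.
by rewrite pnatX (pnatE _ p_pr) (@card_finPcharP _ p (m * n)) // cardF -expnM.
Qed.

Lemma two_neq0_odd_prime_power (F : fieldType) (q : nat) :
  prime_power q -> [pchar F].-nat q -> odd q -> 2%:R != 0 :> F.
Proof.
move=> [p [m [p_pr [m_gt0 ->]]]]; rewrite pnatX (pnatE _ p_pr) eqn0Ngt m_gt0 orbF.
move=> pF; rewrite oddX eqn0Ngt m_gt0 /= -(dvdn_pcharf pF).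
by rewrite (dvdn_prime2 p_pr) //; apply: contraTneq => ->.
Qed.

Lemma exprK_half_card (F : finFieldType) (q k : nat) :
  #|F| = (q ^ (2 * k))%N -> forall x : F, x ^+ (q ^ k) ^+ (q ^ k) = x.
Proof. by move=> cardF x; rewrite -exprM -expnD addnn -mul2n -cardF expf_card. Qed.

Lemma Tr_rtrace (F : finFieldType) (q k : nat) (x : F) :
  [pchar F].-nat q ->
  Tr q (2 * k) x = \sum_(i < k) rtrace (q ^ k) x ^+ (q ^ i).
Proof.
move=> pchar_q; rewrite /Tr mul2n -addnn big_split_ord /= -big_split /=.
apply: eq_bigr => i _.
by rewrite exprDn_pchar ?pnatX ?pchar_q // -exprM -expnD addnC.
Qed.

Theorem mainTheorem6 (q : nat) (s t k : nat) (F : finFieldType)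
    (delta gamma alpha beta : F) :
    prime_power q -> odd q -> (1 <= k)%N ->
    #|F| = (q ^ (2 * k))%N ->
    delta ^+ (q ^ k) = delta ->
    gamma ^+ (q ^ k) = gamma ->
    alpha ^+ (q ^ k) = - alpha ->
    beta ^+ (q ^ k) = - beta ->
    is_perm_poly (fun x : F =>
       alpha * (x ^+ (q ^ k) + x + delta) ^+ t
       + beta * Tr q (2 * k) x + gamma * x ^+ (q ^ s))
    <-> gamma != 0.
Proof.
move=> q_pp q_odd _ cardF delta_fixed gamma_fixed alpha_anti beta_anti.
have pchar_q := pchar_nat_prime_power q_pp cardF.
have pchar_qX (i : nat) : [pchar F].-nat (q ^ i)%N by rewrite pnatX pchar_q.
have sigmaK := exprK_half_card cardF.
pose A u := alpha * (u + delta) ^+ t + beta * \sum_(i < k) u ^+ (q ^ i).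
have A_antifixed u : u ^+ (q ^ k) = u -> A u ^+ (q ^ k) = - A u.
  move=> u_fixed; rewrite exprDn_pchar // !exprMn alpha_anti beta_anti.
  rewrite exprAC exprDn_pchar // u_fixed delta_fixed expr_sum_pchar //.
  by under eq_bigr do rewrite exprAC u_fixed; rewrite !mulNr opprD.
have f_perturbed : (fun x : F => alpha * (x ^+ (q ^ k) + x + delta) ^+ t
       + beta * Tr q (2 * k) x + gamma * x ^+ (q ^ s))
    =1 perturbed_frob (q ^ k) (q ^ s) A gamma.
  by move=> x; rewrite Tr_rtrace // /perturbed_frob /rtrace (addrC x).
rewrite /is_perm_poly; split => [f_bij | gamma_neq0].
  have [g _ gK] := eq_bij f_bij f_perturbed.
  apply: (perturbed_frob_surj_neq0 (pchar_qX k) (pchar_qX s) sigmaK gamma_fixed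
           A_antifixed gK).
  exact: two_neq0_odd_prime_power q_pp pchar_q q_odd.
apply: (eq_bij _ (fsym f_perturbed)); apply: injF_bij.
exact: (perturbed_frob_inj (pchar_qX k) (pchar_qX s) sigmaK gamma_fixed
          A_antifixed gamma_neq0).
Qed.
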